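(* Let $1\le p\le n$, $\beta>0$, and $X\in\mathbb{R}^{n\times p}_*$. Let $\mathrm{St}_{X^\top X}=\{Y\in\mathbb{R}^{n\times p}\mid Y^\top Y=X^\top X\}$, whose tangent space at $X$ is $\mathrm{T}_X\mathrm{St}_{X^\top X}=\{\xi\in\mathbb{R}^{n\times p}\mid \xi^\top X+X^\top\xi=0\}$. Define the normal space of $\mathrm{St}_{X^\top X}$ at $X$ with respect to $g^\beta$ as \[\mathrm{N}^\beta_X\mathrm{St}_{X^\top X}=\{U\in\mathbb{R}^{n\times p}\mid g^\beta_X(U,\xi)=0\text{ for all }\xi\in\mathrm{T}_X\mathrm{St}_{X^\top X}\}.\] Then \[\mathrm{N}^\beta_X\mathrm{St}_{X^\top X}=\{X(X^\top X)^{-1}S\mid S\in\mathrm{Sym}(p)\}.\]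
   Context: $\mathbb{R}^{n\times p}_*$ denotes the set of full-rank (rank $p$) real $n\times p$ matrices; $\mathrm{Sym}(p)$ is the set of real symmetric $p\times p$ matrices. For $\beta>0$ and $X\in\mathbb{R}^{n\times p}_*$, the $\beta$-metric is the inner product on $\mathbb{R}^{n\times p}$ given by \[g^\beta_X(\xi,\zeta)=\mathrm{trace}\Big(\xi^\top\big(\mathrm{I}_n-(1-\beta)X(X^\top X)^{-1}X^\top\big)\zeta\,(X^\top X)^{-1}\Big),\qquad \xi,\zeta\in\mathbb{R}^{n\times p}.\] *)

From mathcomp Require Import all_boot all_order all_algebra.
Set Implicit Arguments. Unset Strict Implicit. Unset Printing Implicit Defensive.
Import Order.TTheory GRing.Theory Num.Theory.
Local Open Scope ring_scope.

Definition beta_metric (R : realFieldType) (n p : nat) (beta : R)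
    (X xi zeta : 'M[R]_(n, p)) : R :=
  let G := invmx (X^T *m X) in
  \tr (xi^T *m (1%:M - (1 - beta) *: (X *m G *m X^T)) *m zeta *m G).

Definition tangent_St (R : realFieldType) (n p : nat) (X xi : 'M[R]_(n, p)) : Prop :=
  xi^T *m X + X^T *m xi = 0.

Definition normal_St (R : realFieldType) (n p : nat) (beta : R)
    (X U : 'M[R]_(n, p)) : Prop :=
  forall xi : 'M[R]_(n, p), tangent_St X xi -> beta_metric beta X U xi = 0.

From mathcomp Require Import all_boot all_order all_algebra.
Set Implicit Arguments. Unset Strict Implicit. Unset Printing Implicit Defensive.
Import Order.TTheory GRing.Theory Num.Theory.
Local Open Scope ring_scope.

(* Write G = X^T X and P = X G^-1 X^T, the orthogonal projector onto the range
   of X.  The tangent space contains every (1 - P) Z and every X G^-1 W with W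
   skew-symmetric.  Since g^beta_X(U, (1 - P) Z) = tr (G^-1 U^T (1 - P) Z),
   a normal U satisfies (1 - P) U = 0, i.e. U = X G^-1 S with S = X^T U.  For
   such U, g^beta_X(U, xi) = beta tr (G^-1 S^T G^-1 X^T xi); testing against
   xi = X G^-1 W shows G^-1 S^T G^-1 is orthogonal to every skew W for the
   trace form, hence symmetric, hence S is symmetric.  Conversely, X^T xi is
   skew for tangent xi, and the trace of symmetric times skew vanishes. *)

Section TraceForm.
Variable R : comNzRingType.

Lemma mxtrace_mul_delta m n (A : 'M[R]_(m, n)) i j :
  \tr (A *m delta_mx i j) = A j i.
Proof.
rewrite /mxtrace (bigD1 j) //= big1 ?addr0.
  rewrite mxE (bigD1 i) //= big1 ?addr0; first by rewrite mxE !eqxx mulr1.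
  by move=> k /negbTE kn; rewrite mxE kn mulr0.
by move=> k /negbTE kn; rewrite mxE big1 // => l _; rewrite mxE kn andbF mulr0.
Qed.

Lemma mxtrace_mul_eq0 m n (A : 'M[R]_(m, n)) :
  (forall Z, \tr (A *m Z) = 0) -> A = 0.
Proof.
by move=> trA0; apply/matrixP => j i; rewrite mxE -(mxtrace_mul_delta A i j).
Qed.

Lemma mxtrace_mul_skew_sym n (B : 'M[R]_n) :
  (forall W : 'M_n, W^T = - W -> \tr (B *m W) = 0) -> B^T = B.
Proof.
move=> trBW0; apply/esym/eqP; rewrite -subr_eq0; apply/eqP/mxtrace_mul_eq0 => Z.
have /trBW0 : (Z - Z^T)^T = - (Z - Z^T) by rewrite linearB /= trmxK opprB.
rewrite mulmxBr mulmxBl !linearB /= => /eqP; rewrite subr_eq0 => /eqP ->.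
by rewrite -mxtrace_tr trmx_mul trmxK mxtrace_mulC subrr.
Qed.

End TraceForm.

Lemma mxtrace_sym_mul_skew (R : numDomainType) n (A W : 'M[R]_n) :
  A^T = A -> W^T = - W -> \tr (A *m W) = 0.
Proof.
move=> AT WT; have trN : \tr (A *m W) = - \tr (A *m W).
  by rewrite -[LHS]mxtrace_tr trmx_mul WT AT mulNmx linearN /= mxtrace_mulC.
have : \tr (A *m W) *+ 2 == 0 by rewrite mulr2n {1}trN addNr.
by rewrite mulrn_eq0 => /eqP.
Qed.

Lemma row_mul_tr_eq0 (R : realDomainType) n (u : 'rV[R]_n) :
  u *m u^T = 0 -> u = 0.
Proof.
move/matrixP => /(_ 0 0); rewrite !mxE.
under eq_bigr do rewrite mxE -expr2.
move/eqP; rewrite psumr_eq0; last by move=> k _; rewrite sqr_ge0.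
move/allP => u2_0; apply/matrixP => i k; rewrite (ord1 i) mxE.
by have := u2_0 k (mem_index_enum _); rewrite implyTb sqrf_eq0 => /eqP.
Qed.

Lemma gram_unitmx (R : realFieldType) m n (X : 'M[R]_(m, n)) :
  \rank X = n -> X^T *m X \in unitmx.
Proof.
move=> rX; rewrite -row_free_unit; apply: inj_row_free => v; rewrite mulmxA => vXX0.
have frXT : row_free X^T by rewrite -row_leq_rank mxrank_tr rX.
apply/eqP; rewrite -(mulmx_free_eq0 _ frXT); apply/eqP.
by apply: row_mul_tr_eq0; rewrite trmx_mul trmxK mulmxA vXX0 mul0mx.
Qed.

Section NormalSpace.
Variables (R : realFieldType) (n p : nat) (beta : R) (X : 'M[R]_(n, p)).
Hypothesis gram_unit : X^T *m X \in unitmx.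

Local Notation G := (X^T *m X).
Local Notation Gi := (invmx (X^T *m X)).
Local Notation P := (X *m Gi *m X^T).

Lemma invgram_tr : Gi^T = Gi.
Proof. by rewrite trmx_inv trmx_mul trmxK. Qed.

Lemma proj_tr : P^T = P.
Proof. by rewrite !trmx_mul trmxK invgram_tr mulmxA. Qed.

Lemma proj_mulX : P *m X = X.
Proof. by rewrite -!mulmxA mulVmx // mulmx1. Qed.

Lemma trX_mul_proj : X^T *m P = X^T.
Proof. by rewrite !mulmxA mulmxV // mul1mx. Qed.

Lemma proj_idem : P *m P = P.
Proof. by rewrite -mulmxA trX_mul_proj. Qed.

Lemma tangent_St_proj_compl Z : tangent_St X ((1%:M - P) *m Z).
Proof.
have compl_X : (1%:M - P) *m X = 0 by rewrite mulmxBl mul1mx proj_mulX subrr.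
have trX_compl : X^T *m (1%:M - P) = 0 by rewrite mulmxBr mulmx1 trX_mul_proj subrr.
rewrite /tangent_St trmx_mul linearB /= trmx1 proj_tr -(mulmxA Z^T) compl_X mulmxA.
by rewrite trX_compl mulmx0 mul0mx addr0.
Qed.

Lemma tangent_St_skew W : W^T = - W -> tangent_St X (X *m Gi *m W).
Proof.
move=> WT; rewrite /tangent_St !trmx_mul invgram_tr WT.
by rewrite -!mulmxA (mulmxA X^T X) mulVmx // mulmx1 mulmxA mulmxV // mul1mx addNr.
Qed.

Lemma beta_metric_proj_compl U Z :
  beta_metric beta X U ((1%:M - P) *m Z) = \tr (Gi *m U^T *m (1%:M - P) *m Z).
Proof.
rewrite /beta_metric -(mulmxA U^T).
have -> : (1%:M - (1 - beta) *: P) *m ((1%:M - P) *m Z) = (1%:M - P) *m Z.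
  by rewrite mulmxA mulmxBl mul1mx -scalemxAl mulmxBr mulmx1 proj_idem subrr scaler0 subr0.
by rewrite mxtrace_mulC !mulmxA.
Qed.

Lemma beta_metric_range S xi :
  beta_metric beta X (X *m Gi *m S) xi = beta * \tr (Gi *m S^T *m Gi *m (X^T *m xi)).
Proof.
rewrite /beta_metric.
have -> : (X *m Gi *m S)^T *m (1%:M - (1 - beta) *: P) = beta *: (S^T *m Gi *m X^T).
  rewrite !trmx_mul invgram_tr mulmxBr mulmx1 -scalemxAr -[S^T *m _ *m P]mulmxA.
  rewrite -[Gi *m X^T *m P]mulmxA trX_mul_proj -mulmxA.
  by rewrite scalerBl scale1r opprB addrC subrK.
by rewrite -!scalemxAl mxtraceZ mxtrace_mulC !mulmxA.
Qed.

Lemma normal_St_range U : normal_St beta X U -> U = X *m Gi *m (X^T *m U).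
Proof.
move=> nU; have compl0 : Gi *m U^T *m (1%:M - P) = 0.
  apply: mxtrace_mul_eq0 => Z.
  by rewrite -beta_metric_proj_compl; apply/nU/tangent_St_proj_compl.
have : G *m (Gi *m U^T *m (1%:M - P)) = 0 by rewrite compl0 mulmx0.
rewrite !mulmxA mulmxV // mul1mx => /(congr1 trmx).
rewrite trmx_mul linearB /= trmx1 proj_tr trmxK trmx0 => compl_U.
by apply/eqP; rewrite -subr_eq0 -{1}(mul1mx U) -mulmxBl compl_U.
Qed.

Lemma sym_normal_St S : S^T = S -> normal_St beta X (X *m Gi *m S).
Proof.
move=> ST xi tg_xi; rewrite beta_metric_range mxtrace_sym_mul_skew ?mulr0 //.
  by rewrite !trmx_mul trmxK invgram_tr ST mulmxA.
by rewrite trmx_mul trmxK; apply/eqP; rewrite -addr_eq0 tg_xi.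
Qed.

Hypothesis beta_neq0 : beta != 0.

Lemma normal_St_range_sym S : normal_St beta X (X *m Gi *m S) -> S^T = S.
Proof.
move=> nS; pose B := Gi *m S^T *m Gi.
have BT : B^T = B.
  apply: mxtrace_mul_skew_sym => W /tangent_St_skew /nS; rewrite beta_metric_range.
  have -> : X^T *m (X *m Gi *m W) = W by rewrite !mulmxA mulmxV // mul1mx.
  by move=> /eqP; rewrite mulf_eq0 (negbTE beta_neq0) => /eqP.
have : G *m B^T *m G = G *m B *m G by rewrite BT.
rewrite /B !trmx_mul trmxK invgram_tr !mulmxA mulmxV // mul1mx -!mulmxA mulVmx //.
by rewrite mul1mx !mulmx1 => /esym.
Qed.

End NormalSpace.

Theorem proposition3 (R : realFieldType) (n p : nat) (beta : R)
    (X : 'M[R]_(n, p)) :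
  (1 <= p)%N -> (p <= n)%N -> 0 < beta -> \rank X = p ->
  forall U : 'M[R]_(n, p),
    normal_St beta X U <->
    exists S : 'M[R]_p, S^T = S /\ U = X *m invmx (X^T *m X) *m S.
Proof.
move=> _ _ beta_gt0 /gram_unitmx gram_unit U; split.
- move=> nU; have U_range := normal_St_range gram_unit nU.
  exists (X^T *m U); split; last exact: U_range.
  apply: (normal_St_range_sym gram_unit (lt0r_neq0 beta_gt0)).
  by move: nU; rewrite {1}U_range.
- by case=> S [ST ->]; apply: sym_normal_St.
Qed.
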